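(* Let $r,R>0$, $N\in\mathbb{N}$, $d\ge N$, and define $f_{N,r}:B_R(0)\to\mathbb{R}$ by $f_{N,r}(x)=\max_{i\in[N]}\{x_i-4r\cdot i\}$. Then: (1) $f_{N,r}$ is an $r$-robust zero-chain; (2) for every $x\in B_R(0)$ with $i_r^+(x)\le N$, $f_{N,r}(x)-\inf_{z\in B_R(0)}f_{N,r}(z)\ge\frac{R}{\sqrt N}-4Nr$; (3) $f_{N,r}$ is convex and $1$-Lipschitz (in the Euclidean norm).
   Context: All norms are Euclidean and $B_\rho(\bar x)=\{x\in\mathbb{R}^d:\|x-\bar x\|_2\le\rho\}$. For $x\in\mathbb{R}^d$, $i_r^+(x)=\min\{i\in[d]: |x_j|\le r\text{ for all }j\ge i\}$, with $i_r^+(x)=d+1$ if $|x_d|>r$. A function $f:B_R(0)\to\mathbb{R}$ is an $r$-robust zero-chain if for every $\bar x\in\mathbb{R}^d$ and every $x\in B_r(\bar x)\cap B_R(0)$, $f(x)=f(x_1,\ldots,x_{i_r^+(\bar x)},0,\ldots,0)$ (interpreted as $f(x)$ when $i_r^+(\bar x)=d+1$). *)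

(* classical reals. Vectors of R^d are represented as
   functions nat -> R, with coordinates indexed 1..d (as in the paper);
   values at indices 0 and > d are ignored by every definition below. *)
From Stdlib Require Import Reals Lra Lia.
Open Scope R_scope.

Fixpoint sum1 (n : nat) (g : nat -> R) : R :=
  match n with
  | O => 0
  | S k => sum1 k g + g (S k)
  end.

Definition norm2 (d : nat) (x : nat -> R) : R :=
  sqrt (sum1 d (fun j => x j ^ 2)).

Definition vsub (x y : nat -> R) : nat -> R := fun j => x j - y j.
Definition vcomb (t : R) (x y : nat -> R) : nat -> R :=
  fun j => t * x j + (1 - t) * y j.

Definition trunc (i : nat) (x : nat -> R) : nat -> R :=
  fun j => if (j <=? i)%nat then x j else 0.

Fixpoint maxupto (n : nat) (g : nat -> R) : R :=
  match n with
  | O => g 1%nat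
  | S k => Rmax (maxupto k g) (g (S k))
  end.

Definition fNr (N : nat) (r : R) (x : nat -> R) : R :=
  maxupto N (fun i => x i - 4 * r * INR i).

Definition iplus_spec (d : nat) (r : R) (x : nat -> R) (i : nat) : Prop :=
  (r < Rabs (x d) /\ i = S d) \/
  (Rabs (x d) <= r /\
   (1 <= i <= d)%nat /\
   (forall j, (i <= j <= d)%nat -> Rabs (x j) <= r) /\
   (forall i', (1 <= i' <= d)%nat ->
      (forall j, (i' <= j <= d)%nat -> Rabs (x j) <= r) -> (i <= i')%nat)).

Definition robust_zero_chain (d : nat) (r Rad : R) (f : (nat -> R) -> R) : Prop :=
  forall (xbar x : nat -> R) (i : nat),
    norm2 d (vsub x xbar) <= r -> norm2 d x <= Rad ->
    iplus_spec d r xbar i ->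
    f x = f (trunc i x).

Definition is_glb (E : R -> Prop) (m : R) : Prop :=
  (forall y, E y -> m <= y) /\ (forall b, (forall y, E y -> b <= y) -> b <= m).

(* For (1): around a point xbar with i = i_r^+(xbar), every coordinate x_j with j >= i
   satisfies |x_j| <= 2r, so every term of index j > i, of x or of its truncation, is at
   most 2r - 4r(i+1) < -2r - 4ri <= x_i - 4ri; only x_1, ..., x_i matter.
   For (2): a point x with i_r^+(x) <= N has f(x) >= x_i - 4ri >= -r - 4Nr, while the
   point with first N coordinates -R/sqrt N lies in the ball and has f <= -R/sqrt N - 4r.
   (3) holds because f is a maximum of affine functions each depending on one
   coordinate, which is 1-Lipschitz in the Euclidean norm. *)

From Stdlib Require Import Reals Lra Lia.
Open Scope R_scope.

Lemma Rabs_le_inv (a b : R) : Rabs a <= b -> - b <= a <= b.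
Proof. unfold Rabs; destruct Rcase_abs; lra. Qed.

Lemma sum1_nonneg (n : nat) (g : nat -> R) :
  (forall j, 0 <= g j) -> 0 <= sum1 n g.
Proof. intros Hg; induction n as [|n IH]; simpl; [lra|]. specialize (Hg (S n)); lra. Qed.

Lemma sum1_ge_term (n k : nat) (g : nat -> R) :
  (forall j, 0 <= g j) -> (1 <= k <= n)%nat -> g k <= sum1 n g.
Proof.
  intros Hg; induction n as [|n IH]; intros Hk; [lia|]; simpl.
  destruct (Nat.eq_dec k (S n)) as [->|Hne].
  - pose proof (sum1_nonneg n g Hg); lra.
  - pose proof (IH ltac:(lia)); pose proof (Hg (S n)); lra.
Qed.

Lemma Rabs_coord_le_norm2 (d k : nat) (x : nat -> R) :
  (1 <= k <= d)%nat -> Rabs (x k) <= norm2 d x.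
Proof.
  intros Hk; unfold norm2; rewrite <- sqrt_Rsqr_abs; apply sqrt_le_1_alt.
  rewrite Rsqr_pow2.
  apply (sum1_ge_term d k (fun j => x j ^ 2)); [intros j; apply pow2_ge_0 | exact Hk].
Qed.

Lemma sum1_sq_trunc_const (n N : nat) (a : R) :
  sum1 n (fun j => trunc N (fun _ => a) j ^ 2) = INR (Nat.min n N) * a ^ 2.
Proof.
  unfold trunc; induction n as [|n IH]; cbn [sum1]; [simpl; ring|]; rewrite IH.
  destruct (S n <=? N)%nat eqn:E.
  - apply Nat.leb_le in E.
    rewrite (Nat.min_l (S n) N), (Nat.min_l n N), S_INR by lia; ring.
  - apply Nat.leb_gt in E.
    rewrite (Nat.min_r (S n) N), (Nat.min_r n N) by lia; ring.
Qed.

Lemma norm2_trunc_const (d N : nat) (a : R) :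
  (N <= d)%nat -> norm2 d (trunc N (fun _ => a)) = sqrt (INR N) * Rabs a.
Proof.
  intros HNd; unfold norm2; rewrite sum1_sq_trunc_const, Nat.min_r by exact HNd.
  rewrite sqrt_mult_alt by apply pos_INR.
  rewrite <- Rsqr_pow2, sqrt_Rsqr_abs; reflexivity.
Qed.

Lemma maxupto_ge (N k : nat) (g : nat -> R) :
  (1 <= k <= N)%nat -> g k <= maxupto N g.
Proof.
  induction N as [|N IH]; intros Hk; [lia|]; simpl.
  destruct (Nat.eq_dec k (S N)) as [->|Hne]; [apply Rmax_r|].
  eapply Rle_trans; [apply IH; lia | apply Rmax_l].
Qed.

Lemma maxupto_lub (N : nat) (g : nat -> R) (B : R) :
  (1 <= N)%nat -> (forall k, (1 <= k <= N)%nat -> g k <= B) -> maxupto N g <= B.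
Proof.
  induction N as [|N IH]; intros HN Hg; [lia|]; simpl; apply Rmax_lub; [|apply Hg; lia].
  destruct N as [|N]; [apply Hg; lia|].
  apply IH; [lia|]; intros k Hk; apply Hg; lia.
Qed.

Lemma maxupto_le_shift (N : nat) (g h : nat -> R) (c : R) :
  (1 <= N)%nat -> (forall k, (1 <= k <= N)%nat -> g k <= h k + c) ->
  maxupto N g <= maxupto N h + c.
Proof.
  intros HN Hgh; apply maxupto_lub; [exact HN|]; intros k Hk.
  pose proof (maxupto_ge N k h Hk); pose proof (Hgh k Hk); lra.
Qed.

Lemma maxupto_ext (N : nat) (g h : nat -> R) :
  (1 <= N)%nat -> (forall k, (1 <= k <= N)%nat -> g k = h k) ->
  maxupto N g = maxupto N h.
Proof.
  intros HN Hgh; apply Rle_antisym; [rewrite <- (Rplus_0_r (maxupto N h)) |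
    rewrite <- (Rplus_0_r (maxupto N g))];
    apply maxupto_le_shift; auto; intros k Hk; rewrite Hgh by exact Hk; lra.
Qed.

Lemma maxupto_dominated_tail (N i : nat) (g : nat -> R) :
  (1 <= i <= N)%nat -> (forall k, (i < k <= N)%nat -> g k <= g i) ->
  maxupto N g = maxupto i g.
Proof.
  induction N as [|N IH]; intros Hi Htail; [lia|].
  destruct (Nat.eq_dec i (S N)) as [->|Hne]; [reflexivity|]; simpl.
  rewrite <- IH by (lia || (intros k Hk; apply Htail; lia)).
  apply Rmax_left.
  eapply Rle_trans; [apply Htail; lia | apply maxupto_ge; lia].
Qed.

Lemma maxupto_convex (N : nat) (g h : nat -> R) (t : R) :
  (1 <= N)%nat -> 0 <= t <= 1 ->
  maxupto N (fun k => t * g k + (1 - t) * h k) <= t * maxupto N g + (1 - t) * maxupto N h.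
Proof.
  intros HN Ht; apply maxupto_lub; [exact HN|]; intros k Hk.
  pose proof (maxupto_ge N k g Hk); pose proof (maxupto_ge N k h Hk); nra.
Qed.

Section ChainFunction.

Variables (r : R) (N : nat).
Hypotheses (hr : 0 < r) (hN : (1 <= N)%nat).

Lemma fNr_ge_term (x : nat -> R) (k : nat) :
  (1 <= k <= N)%nat -> x k - 4 * r * INR k <= fNr N r x.
Proof. apply (maxupto_ge N k (fun k => x k - 4 * r * INR k)). Qed.

Lemma fNr_trunc_ge (i : nat) (x : nat -> R) :
  (N <= i)%nat -> fNr N r (trunc i x) = fNr N r x.
Proof.
  intros HNi; apply maxupto_ext; [exact hN|]; intros k Hk.
  unfold trunc; rewrite (proj2 (Nat.leb_le k i)) by lia; reflexivity.
Qed.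

Lemma fNr_trunc_small_tail (i : nat) (x : nat -> R) :
  (1 <= i <= N)%nat -> (forall j, (i <= j <= N)%nat -> Rabs (x j) <= 2 * r) ->
  fNr N r (trunc i x) = fNr N r x.
Proof.
  intros Hi Hsmall.
  assert (Hxi := Rabs_le_inv _ _ (Hsmall i ltac:(lia))).
  assert (Hgap : forall k, (i < k)%nat -> INR i + 1 <= INR k)
    by (intros k Hk; rewrite <- S_INR; apply le_INR; lia).
  assert (Htrunc_le : forall k, (k <= i)%nat -> trunc i x k = x k)
    by (intros k Hk; unfold trunc; rewrite (proj2 (Nat.leb_le k i)) by exact Hk; reflexivity).
  unfold fNr.
  rewrite (maxupto_dominated_tail N i (fun k => trunc i x k - 4 * r * INR k)),
    (maxupto_dominated_tail N i (fun k => x k - 4 * r * INR k)); try exact Hi.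
  - apply maxupto_ext; [lia|]; intros k Hk; rewrite Htrunc_le by lia; reflexivity.
  - intros k Hk; cbv beta; pose proof (Rabs_le_inv _ _ (Hsmall k ltac:(lia)));
      pose proof (Hgap k ltac:(lia)); nra.
  - intros k Hk; cbv beta; rewrite (Htrunc_le i) by lia.
    unfold trunc; rewrite (proj2 (Nat.leb_gt k i)) by lia.
    pose proof (Hgap k ltac:(lia)); nra.
Qed.

Lemma fNr_robust_zero_chain (d : nat) (Rad : R) :
  (N <= d)%nat -> robust_zero_chain d r Rad (fNr N r).
Proof.
  intros HNd xbar x i Hdist _ Hi; symmetry.
  destruct (Nat.le_gt_cases N i) as [HNi|HiN]; [exact (fNr_trunc_ge i x HNi)|].
  destruct Hi as [[_ Hi]|[_ [Hi1 [Hbar _]]]]; [lia|].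
  apply fNr_trunc_small_tail; [lia|]; intros j Hj.
  replace (x j) with (xbar j + vsub x xbar j) by (unfold vsub; ring).
  eapply Rle_trans; [apply Rabs_triang|].
  pose proof (Hbar j ltac:(lia)); pose proof (Rabs_coord_le_norm2 d j (vsub x xbar) ltac:(lia)).
  lra.
Qed.

Lemma fNr_trunc_const_le (a : R) : fNr N r (trunc N (fun _ => a)) <= a - 4 * r.
Proof.
  apply maxupto_lub; [exact hN|]; intros k Hk.
  unfold trunc; rewrite (proj2 (Nat.leb_le k N)) by lia.
  assert (1 <= INR k) by (apply (le_INR 1); lia); nra.
Qed.

Lemma fNr_gap_lower_bound (d : nat) (Rad : R) (x : nat -> R) (i : nat) (m : R) :
  0 < Rad -> (N <= d)%nat -> iplus_spec d r x i -> (i <= N)%nat ->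
  (forall y, (exists z, norm2 d z <= Rad /\ y = fNr N r z) -> m <= y) ->
  fNr N r x - m >= Rad / sqrt (INR N) - 4 * INR N * r.
Proof.
  intros HR HNd Hi HiN Hlow.
  assert (HsN : 0 < sqrt (INR N)) by (apply sqrt_lt_R0, (lt_INR 0); lia).
  set (c := Rad / sqrt (INR N)).
  assert (Hc : 0 <= c) by (apply Rlt_le, Rdiv_lt_0_compat; assumption).
  assert (Hm : m <= - c - 4 * r).
  { eapply Rle_trans; [apply Hlow | apply fNr_trunc_const_le].
    exists (trunc N (fun _ => - c)); split; [|reflexivity].
    rewrite norm2_trunc_const, Rabs_Ropp, Rabs_pos_eq by assumption.
    unfold c; right; field; lra. }
  destruct Hi as [[_ Hi]|[_ [Hi1 [Hsmall _]]]]; [lia|].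
  pose proof (Rabs_le_inv _ _ (Hsmall i ltac:(lia))).
  pose proof (fNr_ge_term x i ltac:(lia)).
  assert (INR i <= INR N) by (apply le_INR; exact HiN).
  fold c; nra.
Qed.

Lemma fNr_convex (x y : nat -> R) (t : R) :
  0 <= t <= 1 -> fNr N r (vcomb t x y) <= t * fNr N r x + (1 - t) * fNr N r y.
Proof.
  intros Ht; unfold fNr, vcomb.
  eapply Rle_trans; [|apply maxupto_convex; assumption].
  right; apply maxupto_ext; [exact hN|]; intros k _; ring.
Qed.

Lemma fNr_lipschitz (d : nat) (x y : nat -> R) :
  (N <= d)%nat -> Rabs (fNr N r x - fNr N r y) <= norm2 d (vsub x y).
Proof.
  intros HNd; apply Rabs_le.
  assert (Hcoord : forall k, (1 <= k <= N)%nat ->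
            - norm2 d (vsub x y) <= x k - y k <= norm2 d (vsub x y))
    by (intros k Hk; apply Rabs_le_inv, (Rabs_coord_le_norm2 d k (vsub x y)); lia).
  split.
  - assert (fNr N r y <= fNr N r x + norm2 d (vsub x y)); [|lra].
    apply maxupto_le_shift; [exact hN|]; intros k Hk; pose proof (Hcoord k Hk); lra.
  - assert (fNr N r x <= fNr N r y + norm2 d (vsub x y)); [|lra].
    apply maxupto_le_shift; [exact hN|]; intros k Hk; pose proof (Hcoord k Hk); lra.
Qed.

End ChainFunction.

Theorem lemma14 (r Rad : R) (N d : nat)
  (hr : 0 < r) (hR : 0 < Rad) (hN : (1 <= N)%nat) (hdN : (N <= d)%nat) :
  (* (1) *)
  robust_zero_chain d r Rad (fNr N r) /\
  (* (2) *)
  (forall (x : nat -> R) (i : nat) (m : R),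
     norm2 d x <= Rad -> iplus_spec d r x i -> (i <= N)%nat ->
     is_glb (fun y => exists z, norm2 d z <= Rad /\ y = fNr N r z) m ->
     fNr N r x - m >= Rad / sqrt (INR N) - 4 * INR N * r) /\
  (* (3) convex and 1-Lipschitz on B_R(0) *)
  (forall (x y : nat -> R) (t : R),
     norm2 d x <= Rad -> norm2 d y <= Rad -> 0 <= t <= 1 ->
     fNr N r (vcomb t x y) <= t * fNr N r x + (1 - t) * fNr N r y) /\
  (forall (x y : nat -> R),
     norm2 d x <= Rad -> norm2 d y <= Rad ->
     Rabs (fNr N r x - fNr N r y) <= norm2 d (vsub x y)).
Proof.
  split; [exact (fNr_robust_zero_chain r N hr hN d Rad hdN)|].
  split.
  { intros x i m _ Hi HiN [Hlow _].
    exact (fNr_gap_lower_bound r N hr hN d Rad x i m hR hdN Hi HiN Hlow). }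
  split; [intros x y t _ _; exact (fNr_convex r N hN x y t)|].
  intros x y _ _; exact (fNr_lipschitz r N hN d x y hdN).
Qed.
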